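(* Let $P$ be a Poisson tensor on $\mathbb{R}^3$, let $H\in C^\infty(\mathbb{R}^3)$, let $S\in C^\infty(\mathbb{R}^3)$ satisfy $PdS=0$, and let $g$ be the symmetric tensor with components $g^{ij}=H^iH^j-\delta^{ij}\sum_k H^kH^k$. If $x$ is a regular point of $P$ (i.e. $P(x)\neq 0$) with $d_xS\neq 0$, then $g\,d_xS=0$ if and only if $P\,d_xH=0$.
   Context: $\mathbb{R}^3$ carries the standard Euclidean metric, used to identify tangent and cotangent spaces with $\mathbb{R}^3$; $H^i=H_i=\partial H/\partial x^i$. A Poisson tensor is a skew-symmetric bivector field satisfying the Jacobi identity. *)

From HB Require Import structures.
From mathcomp Require Import all_boot all_order all_algebra.
From mathcomp Require Import all_classical all_reals all_analysis.
Set Implicit Arguments. Unset Strict Implicit. Unset Printing Implicit Defensive.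
Import Order.TTheory GRing.Theory Num.Theory.
Import numFieldNormedType.Exports.
Local Open Scope ring_scope.

Section Defs.
Variable R : realType.
Local Notation V := 'rV[R]_3.

Definition ebasis (i : 'I_3) : V := delta_mx 0 i.

Definition partial (i : 'I_3) (f : V -> R) (x : V) : R := 'D_(ebasis i) f x.

(* gradient (= differential d_x f identified with R^3 via the Euclidean metric),
   as a column vector, so that a bivector/matrix acts on it by  *m  *)
Definition grad (f : V -> R) (x : V) : 'cV[R]_3 := \col_i partial i f x.

Fixpoint Ck (k : nat) (f : V -> R) : Prop :=
  match k with
  | 0 => continuous f
  | k'.+1 => (forall x, differentiable f x) /\ (forall i, Ck k' (partial i f))
  end.
Definition smooth (f : V -> R) : Prop := forall k, Ck k f.

Definition poisson_tensor (P : V -> 'M[R]_3) : Prop :=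
  [/\ (forall i j, smooth (fun x => P x i j)),
      (forall x i j, P x i j = - P x j i) &
      (forall x i j k,
         \sum_(l < 3) (P x i l * partial l (fun y => P y j k) x
                     + P x j l * partial l (fun y => P y k i) x
                     + P x k l * partial l (fun y => P y i j) x) = 0)].

Definition gtensor (H : V -> R) (x : V) : 'M[R]_3 :=
  \matrix_(i, j) (partial i H x * partial j H x
                  - (i == j)%:R * \sum_(k < 3) partial k H x * partial k H x).
End Defs.

From HB Require Import structures.
From mathcomp Require Import all_boot all_order all_algebra.
From mathcomp Require Import all_classical all_reals all_analysis.
From mathcomp Require Import ring.
Set Implicit Arguments. Unset Strict Implicit. Unset Printing Implicit Defensive.
Import Order.TTheory GRing.Theory Num.Theory.
Local Open Scope ring_scope.

(* The statement is pointwise linear algebra at x: only the skew-symmetry of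
   P x is used, not smoothness nor the Jacobi identity.  A skew-symmetric
   P x acts as v |-> p × v for its axial vector p, and g acts as
   v |-> h × (h × v) with h = d_x H.  Since p × d_x S = 0 with p, d_x S
   nonzero, p is a nonzero multiple of d_x S, so P d_x H = 0 iff
   h × d_x S = 0.  On the other hand w = h × d_x S is orthogonal to h, so
   h × (h × w) = -|h|^2 w, whence h × w = 0 forces w = 0: thus
   g d_x S = 0 iff h × d_x S = 0 as well. *)

Definition i0 : 'I_3 := @Ordinal 3 0 isT.
Definition i1 : 'I_3 := @Ordinal 3 1 isT.
Definition i2 : 'I_3 := @Ordinal 3 2 isT.

Lemma ord3P (Q : 'I_3 -> Prop) : Q i0 -> Q i1 -> Q i2 -> forall i, Q i.
Proof. by move=> ? ? ? [[|[|[|//]]] lt3]; rewrite (bool_irrelevance lt3 isT). Qed.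

Section Cross.
Variable R : comRingType.
Implicit Types u v w : 'cV[R]_3.

Definition vec3 (a b c : R) : 'cV[R]_3 := \col_i nth 0 [:: a; b; c] i.

Lemma cV3P u v :
  u i0 0 = v i0 0 -> u i1 0 = v i1 0 -> u i2 0 = v i2 0 -> u = v.
Proof. by move=> *; apply/matrixP => + j; rewrite ord1; apply: ord3P. Qed.

Lemma sum3 (F : 'I_3 -> R) : \sum_i F i = F i0 + F i1 + F i2.
Proof.
rewrite !big_ord_recl big_ord0 addr0 addrA.
by congr (F _ + F _ + F _); apply: val_inj.
Qed.

Definition dot u v : R := \sum_i u i 0 * v i 0.

Definition cross u v : 'cV[R]_3 :=
  vec3 (u i1 0 * v i2 0 - u i2 0 * v i1 0)
       (u i2 0 * v i0 0 - u i0 0 * v i2 0)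
       (u i0 0 * v i1 0 - u i1 0 * v i0 0).

Lemma crossC u v : cross u v = - cross v u.
Proof. by apply: cV3P; rewrite !mxE /=; ring. Qed.

Lemma crossZl a u v : cross (a *: u) v = a *: cross u v.
Proof. by apply: cV3P; rewrite !mxE /=; ring. Qed.

Lemma crossr0 u : cross u 0 = 0.
Proof. by apply: cV3P; rewrite !mxE /=; ring. Qed.

Lemma cross0l v : cross 0 v = 0.
Proof. by rewrite crossC crossr0 oppr0. Qed.

Lemma dot_crossr u v : dot u (cross u v) = 0.
Proof. by rewrite /dot sum3 !mxE /=; ring. Qed.

Lemma cross_cross u v w : cross u (cross v w) = dot u w *: v - dot u v *: w.
Proof. by apply: cV3P; rewrite /dot !sum3 !mxE /=; ring. Qed.

Lemma mulmx_cross_cross u v :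
  (\matrix_(i, j) (u i 0 * u j 0 - (i == j)%:R * dot u u)) *m v
  = cross u (cross u v).
Proof.
rewrite cross_cross; apply/matrixP => + j; rewrite ord1; apply: ord3P;
  by rewrite /dot !mxE !sum3 !mxE /=; ring.
Qed.

End Cross.

Section SkewSymmetric.
Variable R : numDomainType.
Implicit Types (v : 'cV[R]_3) (M : 'M[R]_3).

Definition skew M := forall i j, M i j = - M j i.

Definition axial M : 'cV[R]_3 := vec3 (M i2 i1) (M i0 i2) (M i1 i0).

Lemma skew_diag M i : skew M -> M i i = 0.
Proof.
by move=> /(_ i i) /eqP; rewrite -subr_eq0 opprK -mulr2n mulrn_eq0 => /eqP.
Qed.

Lemma skew_mulmx M v : skew M -> M *m v = cross (axial M) v.
Proof.
move=> skM; apply: cV3P; rewrite !mxE sum3 /= !skew_diag //;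
  by rewrite ?(skM i0 i1) ?(skM i1 i2) ?(skM i2 i0); ring.
Qed.

Lemma skew_axial_eq0 M : skew M -> (axial M == 0) = (M == 0).
Proof.
move=> skM; apply/eqP/eqP => [ax0|->]; last by apply: cV3P; rewrite !mxE.
apply/matrixP => i j; have /matrixP/(_ i 0) := skew_mulmx (delta_mx j 0) skM.
by rewrite ax0 cross0l -colE !mxE.
Qed.

End SkewSymmetric.

Section CrossReal.
Variable R : realFieldType.
Implicit Types u v : 'cV[R]_3.

Lemma dot_self_eq0 u : (dot u u == 0) = (u == 0).
Proof.
apply/eqP/eqP => [u0|->]; last by rewrite /dot big1 // => i _; rewrite mxE mul0r.
apply/matrixP => i j; rewrite ord1 mxE.
have /(_ i isT) := psumr_eq0P (fun k _ => sqr_ge0 (u k 0)) u0.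
by move/eqP; rewrite mulf_eq0 orbb => /eqP.
Qed.

Lemma cross_cross_self_eq0 u v : (cross u (cross u v) == 0) = (cross u v == 0).
Proof.
apply/eqP/eqP => [uw0|->]; last exact: crossr0.
have := cross_cross u u (cross u v).
rewrite uw0 crossr0 dot_crossr scale0r sub0r => /esym/eqP.
rewrite oppr_eq0 scaler_eq0 dot_self_eq0 => /orP[/eqP->|/eqP//].
exact: cross0l.
Qed.

Lemma cross_eq0_proj u v : u != 0 -> cross u v = 0 -> v = (dot u v / dot u u) *: u.
Proof.
move=> u0 uv0; have := cross_cross u u v.
rewrite uv0 crossr0 => /esym/eqP; rewrite subr_eq0 => /eqP uvu.
by rewrite mulrC -scalerA uvu scalerA mulVf ?scale1r ?dot_self_eq0.
Qed.

End CrossReal.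

Lemma gtensor_mulmx (R : realType) (H : 'rV[R]_3 -> R) x v :
  gtensor H x *m v = cross (grad H x) (cross (grad H x) v).
Proof.
rewrite -mulmx_cross_cross; congr (_ *m _); apply/matrixP => i j; rewrite !mxE.
by congr (_ - _ * _); apply: eq_bigr => k _; rewrite !mxE.
Qed.

Theorem mainTheorem7 (R : realType) (P : 'rV[R]_3 -> 'M[R]_3) (H S : 'rV[R]_3 -> R) :
  poisson_tensor P -> smooth H -> smooth S ->
  (forall y, P y *m grad S y = 0) ->
  forall x : 'rV[R]_3, P x != 0 -> grad S x != 0 ->
  (gtensor H x *m grad S x = 0 <-> P x *m grad H x = 0).
Proof.
move=> [_ skP _] _ _ PdS x Px0 dS0.
have skPx : skew (P x) := skP x.
set h := grad H x; set s := grad S x; set p := axial (P x).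
have p0 : p != 0 by rewrite skew_axial_eq0.
have sp0 : cross s p = 0 by rewrite crossC -skew_mulmx // PdS oppr0.
set a := dot s p / dot s s.
have pE : p = a *: s := cross_eq0_proj dS0 sp0.
have a0 : a != 0 by apply: contraNneq p0 => a0; rewrite pE a0 scale0r.
rewrite gtensor_mulmx skew_mulmx // -/p pE crossZl (crossC s).
suff eq0E : (cross h (cross h s) == 0) = (a *: - cross h s == 0).
  by split=> /eqP; [rewrite eq0E | rewrite -eq0E] => /eqP.
by rewrite cross_cross_self_eq0 scaler_eq0 (negPf a0) oppr_eq0.
Qed.
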